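(* Let $X_{\Omega_-}$ and $X_{\Omega_+}$ be concave toric domains in $\mathbb{R}^4$. Suppose that for every pair of relatively prime positive integers $a,b>0$ we have $[(a,b)]_{\Omega_-}\le[(a,b)]_{\Omega_+}$. Then $\Omega_-\subset\Omega_+$.
   Context: Let $\mu:\mathbb{C}^2\to\mathbb{R}^2_{\ge0}$, $\mu(z_1,z_2)=(\pi|z_1|^2,\pi|z_2|^2)$. Let $\Omega\subset\mathbb{R}^2_{\ge0}$ be compact with $0\in\operatorname{int}(\Omega)$, whose boundary consists of the segment from $(0,0)$ to $(a(\Omega),0)$, the segment from $(0,0)$ to $(0,b(\Omega))$ (with $a(\Omega),b(\Omega)>0$), and a continuous curve $\partial_+\Omega$ from $(a(\Omega),0)$ to $(0,b(\Omega))$ meeting the axes only at its endpoints. $X_\Omega=\mu^{-1}(\Omega)$ is a concave toric domain if $\mathbb{R}^2_{\ge0}\setminus\Omega$ is convex. For $(a,b)\in\mathbb{Z}^2_{\ge0}$, $[(a,b)]_\Omega=\min\{ax+by:(x,y)\in\partial_+\Omega\}$ (in the paper this quantity is the $\Omega$-action $\mathcal{A}_\Omega(e_{a,b})$). *)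

From HB Require Import structures.
From mathcomp Require Import all_boot all_order all_algebra.
From mathcomp Require Import all_classical all_reals all_analysis.
Set Implicit Arguments. Unset Strict Implicit. Unset Printing Implicit Defensive.
Import Order.TTheory GRing.Theory Num.Theory.
Import numFieldNormedType.Exports.
Local Open Scope classical_set_scope.
Local Open Scope ring_scope.

Definition bdry {R : realType} (A : set (R * R)) : set (R * R) :=
  closure A `\` interior A.

Definition quadrant {R : realType} : set (R * R) :=
  [set p | 0 <= p.1 /\ 0 <= p.2].

Definition segment {R : realType} (p q : R * R) : set (R * R) :=
  [set z | exists2 t : R, 0 <= t <= 1 &
     z = ((1 - t) * p.1 + t * q.1, (1 - t) * p.2 + t * q.2)].

Definition convex_set2 {R : realType} (A : set (R * R)) : Prop :=
  forall p q, A p -> A q -> forall t : R, 0 <= t <= 1 ->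
    A ((1 - t) * p.1 + t * q.1, (1 - t) * p.2 + t * q.2).

(* Omega is a region as in the paper: compact subset of R^2_{>=0}, 0 in the
   interior of Omega relative to R^2_{>=0}, with boundary consisting of the
   segment [(0,0),(a,0)], the segment [(0,0),(0,b)], and the continuous curve
   C = d_+Omega = gamma([0,1]) from (a,0) to (0,b) meeting the axes only at its
   endpoints. *)
Definition toric_region {R : realType} (Om : set (R * R)) (a b : R)
  (C : set (R * R)) : Prop :=
  [/\ compact Om /\ (Om `<=` quadrant),
      (exists2 e : R, 0 < e & [set p | 0 <= p.1 <= e /\ 0 <= p.2 <= e] `<=` Om),
      0 < a, 0 < b &
      [/\ (exists gamma : R -> R * R,
            [/\ {within `[0, 1], continuous gamma},
                gamma 0 = (a, 0), gamma 1 = (0, b) &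
                C = gamma @` `[0, 1]]),
          (forall p, C p -> p.1 = 0 \/ p.2 = 0 -> p = (a, 0) \/ p = (0, b)) &
          bdry Om = segment (0, 0) (a, 0) `|` segment (0, 0) (0, b) `|` C]].

Definition concave_toric {R : realType} (Om : set (R * R)) (a b : R)
  (C : set (R * R)) : Prop :=
  toric_region Om a b C /\ convex_set2 (quadrant `\` Om).

(* [(m,n)]_Omega = min { m x + n y : (x,y) in d_+Omega }  (the minimum exists
   by compactness; we write it as the infimum) *)
Definition omega_action {R : realType} (C : set (R * R)) (m n : nat) : R :=
  inf [set m%:R * p.1 + n%:R * p.2 | p in C].

From HB Require Import structures.
From mathcomp Require Import all_boot all_order all_algebra.
From mathcomp Require Import all_classical all_reals all_analysis.
From mathcomp Require Import ring lra.
Import Order.TTheory GRing.Theory Num.Theory.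
Import numFieldNormedType.Exports.
Local Open Scope classical_set_scope.
Local Open Scope ring_scope.
Set Implicit Arguments. Unset Strict Implicit. Unset Printing Implicit Defensive.

(* Suppose p lies in Om_m but not in Om_p. As Om_p is closed, some shrunk point
   s p (0 <= s < 1) is still outside Om_p, and the boundary curve C_p crosses the
   ray through s p below s p; hence [(m,n)]_{Om_p} <= s (m p.1 + n p.2) for all m, n.
   For s < t < 1, the point t p is not in the closure of the convex, upward closed
   set R^2_{>=0} \ Om_m, so a nonnegative linear functional strictly separates it
   from C_m. Rounding a large multiple of that functional up to integers and
   dividing by the gcd gives coprime m, n > 0 with
   [(m,n)]_{Om_m} >= t (m p.1 + n p.2) > s (m p.1 + n p.2), a contradiction. *)

Section Plane.
Variable R : realType.
Implicit Types (A C K : set (R * R)) (p q v z : R * R).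

Definition dotp p q : R := p.1 * q.1 + p.2 * q.2.

Definition sqdist z p : R := (p.1 - z.1) ^+ 2 + (p.2 - z.2) ^+ 2.

Definition upward_closed A :=
  forall p v, A p -> 0 <= v.1 -> 0 <= v.2 -> A (p.1 + v.1, p.2 + v.2).

Lemma nbhs_pairP p (P : set (R * R)) :
  nbhs p P <-> exists2 e : R, 0 < e &
    forall q, `|p.1 - q.1| < e -> `|p.2 - q.2| < e -> P q.
Proof.
rewrite nbhs_ballP; split=> -[e e0 Pe]; exists e => //.
  by move=> q h1 h2; apply: Pe; split.
by move=> q [h1 h2]; exact: Pe.
Qed.

Lemma closure_pairP A p :
  closure A p <-> forall e : R, 0 < e ->
    exists2 q, A q & `|p.1 - q.1| < e /\ `|p.2 - q.2| < e.
Proof.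
split=> [clAp e e0 | Ae B /nbhs_pairP [e e0 Be]].
  have [|q [Aq [h1 h2]]] := clAp [set q | `|p.1 - q.1| < e /\ `|p.2 - q.2| < e].
    by apply/nbhs_pairP; exists e.
  by exists q.
by have [q Aq [h1 h2]] := Ae e e0; exists q; split => //; exact: Be.
Qed.

Lemma axis_not_interior A p : A `<=` quadrant -> p.1 = 0 \/ p.2 = 0 ->
  ~ interior A p.
Proof.
move=> Aq axis /nbhs_pairP [e e0 Ae].
have [q Aq' q_neg] : exists2 q, A q & q.1 < 0 \/ q.2 < 0.
  case: axis => p0; [exists (- (e / 2), p.2) | exists (p.1, - (e / 2))].
  - by apply: Ae; rewrite /= ?p0 ?subrr ?normr0 // sub0r opprK gtr0_norm; lra.
  - by left => /=; lra.
  - by apply: Ae; rewrite /= ?p0 ?subrr ?normr0 // sub0r opprK gtr0_norm; lra.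
  - by right => /=; lra.
by have [q1 q2] := Aq _ Aq'; lra.
Qed.

Lemma compact_coord_bounded A : compact A ->
  exists2 M : R, 0 <= M & forall x, A x -> x.1 <= M /\ x.2 <= M.
Proof.
move=> cA; have [M0 [M0_real HM]] := compact_bounded cA.
exists (`|M0| + 1); first by rewrite addr_ge0.
move=> x Ax; have := HM (`|M0| + 1).
rewrite (le_lt_trans (real_ler_norm M0_real)) ?ltrDl // => /(_ isT x Ax).
rewrite /= [X in X <= _]prod_normE ge_max => /andP[h1 h2].
by split; [exact: le_trans (ler_norm _) h1 | exact: le_trans (ler_norm _) h2].
Qed.

Lemma closed_scaled_compl A p : closed A -> ~ A p ->
  exists2 s : R, 0 <= s < 1 & ~ A (s * p.1, s * p.2).
Proof.
move=> clA nAp; apply: contrapT => inA; apply: nAp.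
move/closure_id: clA => ->; apply/closure_pairP => e e0.
pose den := e + `|p.1| + `|p.2|.
have p1_le : `|p.1| < den by rewrite /den; have := normr_ge0 p.2; lra.
have p2_le : `|p.2| < den by rewrite /den; have := normr_ge0 p.1; lra.
have den_gt0 : 0 < den by apply: le_lt_trans p1_le.
pose u := e / den.
have u_gt0 : 0 < u by rewrite divr_gt0.
have u_den : u * den = e by rewrite divfK // gt_eqF.
have u_le1 : u <= 1.
  by rewrite ler_pdivrMr // mul1r /den; have := normr_ge0 p.1; have := normr_ge0 p.2; lra.
exists ((1 - u) * p.1, (1 - u) * p.2).
  by apply: contrapT => nA; apply: inA; exists (1 - u) => //; apply/andP; split; lra.
have E (x : R) : x - (1 - u) * x = u * x by ring.
rewrite /= !E (normrM u p.1) (normrM u p.2) gtr0_norm // -u_den.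
by split; rewrite ltr_pM2l.
Qed.

Lemma dotp_continuous p : continuous (dotp p).
Proof.
move=> q; apply: cvgD; apply: cvgM;
  by [exact: cvg_cst | exact: cvg_fst | exact: cvg_snd].
Qed.

Lemma sqdist_continuous z : continuous (sqdist z).
Proof.
move=> q; rewrite /sqdist; apply: cvgD; rewrite !expr2; apply: cvgM; apply: cvgB;
  by [exact: cvg_cst | exact: cvg_fst | exact: cvg_snd].
Qed.

Lemma sqdist_ge0 z p : 0 <= sqdist z p.
Proof. by rewrite addr_ge0 // sqr_ge0. Qed.

Lemma sqdist_eq0 z p : sqdist z p = 0 -> p = z.
Proof.
move/eqP; rewrite paddr_eq0 ?sqr_ge0 // !sqrf_eq0 !subr_eq0 => /andP[/eqP h1 /eqP h2].
by case: p h1 h2 => ? ? /= -> ->; case: z.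
Qed.

Lemma mix_norm_lt (t u u' e : R) : 0 <= t <= 1 -> `|u| < e -> `|u'| < e ->
  `|(1 - t) * u + t * u'| < e.
Proof.
rewrite !ltr_norml => /andP[? ?] /andP[? ?] /andP[? ?].
by apply/andP; split; case: (ltrP t 1) => ?; nra.
Qed.

Lemma closure_convex A : convex_set2 A -> convex_set2 (closure A).
Proof.
move=> cvxA p q /closure_pairP clp /closure_pairP clq t t01.
apply/closure_pairP => e e0.
have [p' Ap' [hp1 hp2]] := clp e e0; have [q' Aq' [hq1 hq2]] := clq e e0.
exists ((1 - t) * p'.1 + t * q'.1, (1 - t) * p'.2 + t * q'.2); first exact: cvxA.
have E (x y x' y' : R) :
  (1 - t) * x + t * y - ((1 - t) * x' + t * y') = (1 - t) * (x - x') + t * (y - y').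
  by ring.
by rewrite /= !E; split; apply: mix_norm_lt.
Qed.

Lemma closure_upward_closed A : upward_closed A -> upward_closed (closure A).
Proof.
move=> upA p v /closure_pairP clp v1 v2; apply/closure_pairP => e e0.
have [q Aq [h1 h2]] := clp e e0.
exists (q.1 + v.1, q.2 + v.2); first exact: upA.
have E (x y w : R) : x + w - (y + w) = x - y by ring.
by rewrite /= !E.
Qed.

(* Push x + L v out of the bounded set Om; x + v is then a convex combination
   of two points of the complement. *)
Lemma compl_upward_closed Om : compact Om -> convex_set2 (quadrant `\` Om) ->
  upward_closed (quadrant `\` Om).
Proof.
move=> Om_compact compl_convex x v [[x1 x2] nOx] v1 v2.
split; first by split => /=; lra.
have [v0|v_pos] : v.1 + v.2 = 0 \/ 0 < v.1 + v.2.
  by case: (ltrgt0P (v.1 + v.2)) => h; [right | lra | left].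
  have -> : v.1 = 0 by lra.
  have -> : v.2 = 0 by lra.
  by rewrite !addr0; case: (x) nOx.
have [M M_ge0 HM] := compact_coord_bounded Om_compact.
pose L := 1 + 2 * M / (v.1 + v.2).
have L_ge1 : 1 <= L by rewrite lerDl divr_ge0 //; lra.
have L_neq0 : L != 0 by rewrite gt_eqF //; lra.
have Lv : L * (v.1 + v.2) = v.1 + v.2 + 2 * M by rewrite mulrDl mul1r divfK ?gt_eqF.
pose y := (x.1 + L * v.1, x.2 + L * v.2).
have Ky : (quadrant `\` Om) y.
  split; first by split => /=; nra.
  by move=> /HM [/= ? ?]; nra.
have L_inv : 0 <= L^-1 <= 1 by rewrite invr_ge0 invf_le1; lra.
have := compl_convex _ _ (conj (conj x1 x2) nOx) Ky _ L_inv.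
have -> : ((1 - L^-1) * x.1 + L^-1 * y.1, (1 - L^-1) * x.2 + L^-1 * y.2)
          = (x.1 + v.1, x.2 + v.2).
  by rewrite /y /=; congr (_, _); field.
by case.
Qed.

Lemma closed_nearest K z : closed K -> K !=set0 ->
  exists2 d, K d & forall c, K c -> sqdist z d <= sqdist z c.
Proof.
move=> clK [k Kk].
have normK (x : R) : x ^+ 2 = `|x| ^+ 2 by rewrite real_normK // num_real.
pose r := `|k.1 - z.1| + `|k.2 - z.2|.
pose D := (`[z.1 - r, z.1 + r] `*` `[z.2 - r, z.2 + r]) `&` K.
have Dk : D k.
  by split => //; rewrite /= !in_itv /= -!ler_distl /r lerDl lerDr !normr_ge0.
have cD : compact D.
  by apply: compact_closedI clK; apply: compact_setX; exact: segment_compact.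
have [d /set_mem[_ Kd] dmin] := compact_EVT_min (ex_intro _ k Dk) cD
  (continuous_subspaceT (sqdist_continuous (z := z))).
exists d => // c Kc.
have [Dc|nDc] := pselect (D c); first exact/dmin/mem_set.
apply: le_trans (dmin k (mem_set Dk)) _.
have far : r < `|c.1 - z.1| \/ r < `|c.2 - z.2|.
  apply: contrapT => near_c; apply: nDc; split => //.
  rewrite /= !in_itv /= -!ler_distl !leNgt.
  by split; apply/negP => ?; apply: near_c; [left|right].
have := normr_ge0 (k.1 - z.1); have := normr_ge0 (k.2 - z.2).
rewrite /sqdist [(k.1 - _) ^+ 2]normK [(k.2 - _) ^+ 2]normK.
rewrite [(c.1 - _) ^+ 2]normK [(c.2 - _) ^+ 2]normK !expr2.
by case: far; rewrite /r => ? ? ?; nra.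
Qed.

Lemma nearest_variational K z d : convex_set2 K -> K d ->
  (forall c, K c -> sqdist z d <= sqdist z c) ->
  forall c, K c -> 0 <= dotp (d.1 - z.1, d.2 - z.2) (c.1 - d.1, c.2 - d.2).
Proof.
move=> cvxK Kd dmin c Kc; rewrite leNgt; apply/negP.
set S := dotp _ _ => S_lt0.
pose Q := sqdist d c; have Q_ge0 : 0 <= Q := sqdist_ge0 d c.
pose lam := - S / (Q - S).
have lam_gt0 : 0 < lam by rewrite divr_gt0 //; lra.
have lam_le1 : lam <= 1 by rewrite ler_pdivrMr; lra.
have lamQ : lam * Q < - S by rewrite /lam mulrAC ltr_pdivrMr; nra.
(* Moving from d towards c by lam changes sqdist by lam (2 S + lam Q) < 0. *)
have := dmin _ (cvxK _ _ Kd Kc lam (ltac:(apply/andP; split; lra))).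
have -> : sqdist z ((1 - lam) * d.1 + lam * c.1, (1 - lam) * d.2 + lam * c.2)
          = sqdist z d + lam * (2 * S + lam * Q).
  by rewrite /S /Q /sqdist /dotp /=; ring.
nra.
Qed.

(* The separating functional is d - z for the point d of K nearest to z;
   upward closedness of K makes it nonnegative. *)
Lemma separate_upward_convex K z : closed K -> convex_set2 K -> upward_closed K ->
  K !=set0 -> ~ K z ->
  exists l, exists2 eta : R, 0 < eta &
    [/\ 0 <= l.1, 0 <= l.2 & forall c, K c -> dotp l z + eta <= dotp l c].
Proof.
move=> clK cvxK upK K0 nKz.
have [d Kd dmin] := closed_nearest z clK K0.
have var := nearest_variational cvxK Kd dmin.
exists (d.1 - z.1, d.2 - z.2), (sqdist z d).
  rewrite lt_def sqdist_ge0 andbT; apply/eqP => /sqdist_eq0 dz.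
  by apply: nKz; rewrite -dz.
split.
- by have := var _ (upK _ (1, 0) Kd ler01 (lexx 0)); rewrite /dotp /=; lra.
- by have := var _ (upK _ (0, 1) Kd (lexx 0) ler01); rewrite /dotp /=; lra.
- by move=> c Kc; have := var _ Kc; rewrite /dotp /sqdist /= !expr2; lra.
Qed.

Lemma truncnS_itv (x : R) : 0 <= x -> x < (Num.truncn x).+1%:R <= x + 1.
Proof.
by move=> x0; have /andP[lo hi] := truncn_itv x0; rewrite hi -addn1 natrD lerD2r.
Qed.

(* (m, n) rounds N l up, with N so large that N eta beats the rounding error 2 M. *)
Lemma nat_direction_approx (l : R * R) (eta M : R) :
  0 <= l.1 -> 0 <= l.2 -> 0 < eta -> 0 <= M ->
  exists m n : nat, [/\ (0 < m)%N, (0 < n)%N & forall w : R * R,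
    `|w.1| <= M -> `|w.2| <= M -> eta <= dotp l w -> 0 < dotp (m%:R, n%:R) w].
Proof.
move=> l1_ge0 l2_ge0 eta_gt0 M_ge0.
pose N := (Num.truncn (2 * M / eta)).+1.
have /andP[+ _] := truncnS_itv (divr_ge0 (mulr_ge0 (ler0n _ 2) M_ge0) (ltW eta_gt0)).
rewrite -/N ltr_pdivrMr // => NM.
have N_ge0 : 0 <= N%:R :> R by [].
have /andP[m_lo m_hi] := truncnS_itv (mulr_ge0 N_ge0 l1_ge0).
have /andP[n_lo n_hi] := truncnS_itv (mulr_ge0 N_ge0 l2_ge0).
set m := (Num.truncn (N%:R * l.1)).+1 in m_lo m_hi.
set n := (Num.truncn (N%:R * l.2)).+1 in n_lo n_hi.
have err (d x : R) : 0 < d <= 1 -> - M <= x -> - M <= d * x.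
  by move=> /andP[? ?] ?; nra.
exists m, n; split => // w; rewrite !ler_norml /dotp /= => /andP[w1 _] /andP[w2 _] lw.
have e1 := err (m%:R - N%:R * l.1) _ (ltac:(apply/andP; split; lra)) w1.
have e2 := err (n%:R - N%:R * l.2) _ (ltac:(apply/andP; split; lra)) w2.
have e3 : N%:R * eta <= N%:R * (l.1 * w.1 + l.2 * w.2) by rewrite ler_wpM2l.
nra.
Qed.

Lemma coprime_gcdn_decomp (m n : nat) : (0 < m)%N ->
  exists m' n' : nat, [/\ coprime m' n', m = m' * gcdn m n & n = n' * gcdn m n]%N.
Proof.
move=> m_gt0; have g_gt0 : (0 < gcdn m n)%N by rewrite gcdn_gt0 m_gt0.
exists (m %/ gcdn m n)%N, (n %/ gcdn m n)%N.
rewrite !divnK ?dvdn_gcdl ?dvdn_gcdr //; split => //.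
by rewrite /coprime -(eqn_pmul2r g_gt0) mul1n muln_gcdl !divnK ?dvdn_gcdl ?dvdn_gcdr.
Qed.

Lemma coprime_direction_approx (l : R * R) (eta M : R) :
  0 <= l.1 -> 0 <= l.2 -> 0 < eta -> 0 <= M ->
  exists m n : nat, [/\ (0 < m)%N, (0 < n)%N, coprime m n & forall w : R * R,
    `|w.1| <= M -> `|w.2| <= M -> eta <= dotp l w -> 0 < dotp (m%:R, n%:R) w].
Proof.
move=> l1_ge0 l2_ge0 eta_gt0 M_ge0.
have [m0 [n0 [m0_gt0 n0_gt0 approx]]] := nat_direction_approx l1_ge0 l2_ge0 eta_gt0 M_ge0.
have [m [n [cop em en]]] := coprime_gcdn_decomp n0 m0_gt0.
have g_gt0 : 0 < (gcdn m0 n0)%:R :> R by rewrite ltr0n gcdn_gt0 m0_gt0.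
set g := gcdn m0 n0 in em en g_gt0.
exists m, n; split => //.
- by move: m0_gt0; rewrite em muln_gt0 => /andP[].
- by move: n0_gt0; rewrite en muln_gt0 => /andP[].
move=> w w1 w2 lw; move: (approx w w1 w2 lw); rewrite em en !natrM /dotp /=.
have -> : m%:R * g%:R * w.1 + n%:R * g%:R * w.2
          = g%:R * (m%:R * w.1 + n%:R * w.2) :> R by ring.
by rewrite pmulr_rgt0.
Qed.

Lemma dotp_nat_gt0 (m n : nat) p : (0 < m)%N -> (0 < n)%N -> quadrant p ->
  p <> (0, 0) -> 0 < dotp (m%:R, n%:R) p.
Proof.
move=> m_gt0 n_gt0 [p1 p2] p_neq0.
have mR : 1 <= m%:R :> R by rewrite ler1n.
have nR : 1 <= n%:R :> R by rewrite ler1n.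
suff : 0 < p.1 + p.2 by rewrite /dotp /=; nra.
rewrite lt_def addr_ge0 // andbT paddr_eq0 //; apply/negP => /andP[/eqP h1 /eqP h2].
by apply: p_neq0; rewrite (surjective_pairing p) h1 h2.
Qed.

Lemma omega_action_le_point C (m n : nat) y : C `<=` quadrant -> C y ->
  omega_action C m n <= dotp (m%:R, n%:R) y.
Proof.
move=> Cq Cy; apply: ge_inf; last by exists y.
exists 0 => _ [q Cq' <-]; have [q1 q2] := Cq _ Cq'.
by apply: addr_ge0; apply: mulr_ge0.
Qed.

Lemma omega_action_ge C (m n : nat) (v : R) : C !=set0 ->
  (forall c, C c -> v <= dotp (m%:R, n%:R) c) -> v <= omega_action C m n.
Proof.
move=> [c Cc] lb; apply: lb_le_inf; first by exists (dotp (m%:R, n%:R) c), c.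
by move=> _ [q Cq <-]; exact: lb.
Qed.

End Plane.

Section ConcaveToric.
Variables (R : realType) (Om : set (R * R)) (a b : R) (C : set (R * R)).
Hypothesis Om_concave : concave_toric Om a b C.

Let Om_compact : compact Om.
Proof. by case: Om_concave => -[[]]. Qed.

Let a_gt0 : 0 < a.
Proof. by case: Om_concave => -[]. Qed.

Let b_gt0 : 0 < b.
Proof. by case: Om_concave => -[]. Qed.

Let curve_param : exists gamma : R -> R * R,
  [/\ {within `[0, 1], continuous gamma}, gamma 0 = (a, 0), gamma 1 = (0, b)
    & C = gamma @` `[0, 1]].
Proof. by case: Om_concave => -[_ _ _ _ []]. Qed.

Let curve_axes p : C p -> p.1 = 0 \/ p.2 = 0 -> p = (a, 0) \/ p = (0, b).
Proof. by case: Om_concave => -[_ _ _ _ [_ axes _]] _; exact: axes. Qed.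

Let bdry_Om : bdry Om = segment (0, 0) (a, 0) `|` segment (0, 0) (0, b) `|` C.
Proof. by case: Om_concave => -[_ _ _ _ []]. Qed.

Let compl_convex : convex_set2 (quadrant `\` Om).
Proof. by case: Om_concave. Qed.

Lemma concave_toric_quadrant : Om `<=` quadrant.
Proof. by case: Om_concave => -[[]]. Qed.

Lemma concave_toric_closed : closed Om.
Proof. by move: Om_compact; apply: compact_closed. Qed.

Lemma concave_toric_origin : Om (0, 0).
Proof.
by case: Om_concave => -[_ [e e_gt0 box] _ _ _] _; apply: box => /=; rewrite lexx ltW.
Qed.

Let Om_quadrant := concave_toric_quadrant.

Lemma curve_sub : C `<=` Om.
Proof.
move=> c Cc; have [] : bdry Om c by rewrite bdry_Om; right.
by move/closure_id: concave_toric_closed => <-.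
Qed.

Lemma curve_a0 : C (a, 0).
Proof.
have [g [_ g0 _ ->]] := curve_param; exists 0 => //.
by rewrite /= in_itv /= lexx ler01.
Qed.

Lemma curve_dotp_ivt (l : R * R) (u : R) :
  dotp l (0, b) <= u <= dotp l (a, 0) -> exists2 c, C c & dotp l c = u.
Proof.
move=> /andP[lo hi]; have [g [gc g0 g1 Cg]] := curve_param.
have lg : {within `[0, 1], continuous (fun s => dotp l (g s))}.
  move=> s; apply: (@continuous_comp _ _ _ (from_subspace `[0, 1] g) (dotp l)).
    exact: gc.
  exact: dotp_continuous.
have [|s s01 <-] := IVT (v := u) ler01 lg.
  by rewrite g0 g1 ge_min le_max lo hi orbT.
by exists (g s) => //; rewrite Cg; exists s.
Qed.

Lemma concave_toric_axis_le p : Om p -> p.1 = 0 \/ p.2 = 0 -> p.1 <= a /\ p.2 <= b.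
Proof.
move=> Op axis; have : bdry Om p.
  by split; [exact: subset_closure | exact: axis_not_interior Om_quadrant axis].
rewrite bdry_Om => -[[[t /andP[t0 t1] ->]|[t /andP[t0 t1] ->]]|Cp] /=.
- by have := a_gt0; have := b_gt0; split; nra.
- by have := a_gt0; have := b_gt0; split; nra.
- by have := a_gt0; have := b_gt0; case: (curve_axes Cp axis) => -> /=; lra.
Qed.

Lemma curve_vertical u : 0 < u < a -> exists2 c, C c & c.1 = u /\ 0 < c.2.
Proof.
move=> /andP[u_gt0 u_lt]; have [|c Cc] := curve_dotp_ivt (l := (1, 0)) (u := u).
  by rewrite /dotp /=; apply/andP; split; lra.
rewrite /dotp /= mul1r mul0r addr0 => cu; exists c => //; split => //.
have [_ c2] := Om_quadrant (curve_sub Cc).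
rewrite lt_neqAle c2 andbT; apply/eqP => c20.
by case: (curve_axes Cc (or_intror (esym c20))) => ce; rewrite ce /= in cu; lra.
Qed.

Lemma curve_horizontal v : 0 < v < b -> exists2 c, C c & 0 < c.1 /\ c.2 = v.
Proof.
move=> /andP[v_gt0 v_lt]; have [|c Cc] := curve_dotp_ivt (l := (0, -1)) (u := - v).
  by rewrite /dotp /=; apply/andP; split; lra.
rewrite /dotp /= mul0r add0r mulN1r => /oppr_inj cv; exists c => //; split => //.
have [c1 _] := Om_quadrant (curve_sub Cc).
rewrite lt_neqAle c1 andbT; apply/eqP => c10.
by case: (curve_axes Cc (or_introl (esym c10))) => ce; rewrite ce /= in cv; lra.
Qed.

Lemma curve_below x : quadrant x -> ~ Om x ->
  exists2 y, C y & y.1 <= x.1 /\ y.2 <= x.2.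
Proof.
move=> qx nOx; have [x1 x2] := qx.
have [|y Cy] := curve_dotp_ivt (l := (x.2, - x.1)) (u := 0).
  by have a0 := a_gt0; have b0 := b_gt0; rewrite /dotp /=; apply/andP; split; nra.
rewrite /dotp /= => ray; exists y => //.
have [y1 y2] := Om_quadrant (curve_sub Cy).
have not_above : ~ (x.1 <= y.1 /\ x.2 <= y.2).
  move=> [h1 h2]; have := compl_upward_closed Om_compact compl_convex
    (conj qx nOx) (v := (y.1 - x.1, y.2 - x.2)).
  rewrite /= !subrKC !subr_ge0 => /(_ h1 h2) [_]; apply.
  by rewrite (surjective_pairing y) in Cy; exact: curve_sub.
by split; rewrite leNgt; apply/negP => h; apply: not_above; split; nra.
Qed.

Let K := closure (quadrant `\` Om).

Let K_upward : upward_closed K.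
Proof.
exact: closure_upward_closed (compl_upward_closed Om_compact compl_convex).
Qed.

Lemma curve_sub_closure_compl : C `<=` K.
Proof.
move=> c Cc; have [c1 c2] := Om_quadrant (curve_sub Cc).
have a0 := a_gt0; have b0 := b_gt0.
have [c1_0|c1_neq0] := eqVneq c.1 0.
  have [ca|cb] := curve_axes Cc (or_introl c1_0); first by rewrite ca /= in c1_0; lra.
  rewrite cb; apply/closure_pairP => e e_gt0; exists (0, b + e / 2).
    split; first by split => /=; lra.
    by move=> /concave_toric_axis_le /= /(_ (or_introl erefl)) []; lra.
  by rewrite /= subrr normr0 opprD addrA subrr add0r normrN gtr0_norm; lra.
have [c2_0|c2_neq0] := eqVneq c.2 0.
  have [ca|cb] := curve_axes Cc (or_intror c2_0); last by rewrite cb /= in c2_0; lra.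
  rewrite ca; apply/closure_pairP => e e_gt0; exists (a + e / 2, 0).
    split; first by split => /=; lra.
    by move=> /concave_toric_axis_le /= /(_ (or_intror erefl)) []; lra.
  by rewrite /= subrr normr0 opprD addrA subrr add0r normrN gtr0_norm; lra.
have [_] : bdry Om c by rewrite bdry_Om; right.
have {c1_neq0}c1 : 0 < c.1 by rewrite lt_def c1_neq0.
have {c2_neq0}c2 : 0 < c.2 by rewrite lt_def c2_neq0.
(* Near c, every point outside Om lies in the quadrant. *)
move=> not_int; apply/closure_pairP => e e_gt0; apply: contrapT => noK; apply: not_int.
apply/nbhs_pairP; exists (Num.min e (Num.min c.1 c.2)); first by rewrite !lt_min e_gt0 c1 c2.
move=> q; rewrite !lt_min !ltr_norml => /and3P[/andP[? ?] /andP[? ?] /andP[? ?]].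
move=> /and3P[/andP[? ?] /andP[? ?] /andP[? ?]]; apply: contrapT => nOq.
apply: noK; exists q; first by split => //; split; lra.
by rewrite !ltr_norml; split; apply/andP; split; lra.
Qed.

Lemma exists_point_above p t : Om p -> 0 <= t < 1 ->
  exists2 q, Om q & t * p.1 < q.1 /\ t * p.2 < q.2.
Proof.
move=> Op /andP[t0 t1]; have [p1 p2] := Om_quadrant Op.
have a0 := a_gt0; have b0 := b_gt0.
have [p2_0|p2_neq0] := eqVneq p.2 0.
  have [pa _] := concave_toric_axis_le Op (or_intror p2_0).
  have [|c Cc [c1 c2]] := curve_vertical (u := (t * p.1 + a) / 2).
    by apply/andP; split; nra.
  by exists c; [exact: curve_sub | rewrite c1 p2_0 mulr0; split => //; nra].
have [p1_0|p1_neq0] := eqVneq p.1 0.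
  have [_ pb] := concave_toric_axis_le Op (or_introl p1_0).
  have [|c Cc [c1 c2]] := curve_horizontal (v := (t * p.2 + b) / 2).
    by apply/andP; split; nra.
  by exists c; [exact: curve_sub | rewrite c2 p1_0 mulr0; split => //; nra].
have {p1_neq0}p1 : 0 < p.1 by rewrite lt_def p1_neq0.
have {p2_neq0}p2 : 0 < p.2 by rewrite lt_def p2_neq0.
by exists p => //; split; nra.
Qed.

Lemma scaled_notin_closure_compl p t : Om p -> 0 <= t < 1 -> ~ K (t * p.1, t * p.2).
Proof.
move=> Op t01 /closure_pairP clz; have [q Oq [q1 q2]] := exists_point_above Op t01.
pose w := Num.min (q.1 - t * p.1) (q.2 - t * p.2).
have [|k [qk nOk] []] := clz w; first by rewrite lt_min !subr_gt0 q1 q2.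
rewrite /= !lt_min !ltr_norml => /andP[/andP[? ?] _] /andP[_ /andP[? ?]].
have := compl_upward_closed Om_compact compl_convex (conj qk nOk)
  (v := (q.1 - k.1, q.2 - k.2)).
rewrite /= !subrKC !subr_ge0 => /(_ _ _) [| |_ //]; [lra | lra |].
by rewrite (surjective_pairing q) in Oq.
Qed.

Lemma omega_action_lower_bound p t : Om p -> 0 <= t < 1 ->
  exists m n : nat, [/\ (0 < m)%N, (0 < n)%N, coprime m n &
    t * dotp (m%:R, n%:R) p <= omega_action C m n].
Proof.
move=> Op t01; have [p1 p2] := Om_quadrant Op.
have CK := curve_sub_closure_compl.
have [l [eta eta_gt0 [l1 l2 sep]]] := separate_upward_convex
  (@closed_closure _ (quadrant `\` Om)) (closure_convex compl_convex) K_upward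
  (ex_intro _ _ (CK _ curve_a0)) (scaled_notin_closure_compl Op t01).
have [M M_ge0 HM] := compact_coord_bounded Om_compact.
have [m [n [m_gt0 n_gt0 cop approx]]] := coprime_direction_approx l1 l2 eta_gt0 M_ge0.
exists m, n; split => //.
apply: omega_action_ge; first by exists (a, 0); exact: curve_a0.
move=> c Cc; apply: ltW; have Oc := curve_sub Cc.
have [c1 c2] := Om_quadrant Oc; have [c1M c2M] := HM _ Oc; have [p1M p2M] := HM _ Op.
have /andP[t0 t1] := t01.
have w1 : `|c.1 - t * p.1| <= M by rewrite ler_norml; apply/andP; split; nra.
have w2 : `|c.2 - t * p.2| <= M by rewrite ler_norml; apply/andP; split; nra.
have lw : eta <= dotp l (c.1 - t * p.1, c.2 - t * p.2).
  by move: (sep _ (CK _ Cc)); rewrite /dotp /=; lra.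
by move: (approx (c.1 - t * p.1, c.2 - t * p.2) w1 w2 lw); rewrite /dotp /=; lra.
Qed.

Lemma omega_action_upper_bound x (m n : nat) : quadrant x -> ~ Om x ->
  omega_action C m n <= dotp (m%:R, n%:R) x.
Proof.
move=> qx nOx; have [y Cy [yx1 yx2]] := curve_below qx nOx.
apply: le_trans (omega_action_le_point m n (fun c Cc => Om_quadrant (curve_sub Cc)) Cy) _.
by rewrite /dotp lerD // ler_wpM2l.
Qed.

End ConcaveToric.

Unset Implicit Arguments.

Theorem lemma3p10 (R : realType)
  (Om_m : set (R * R)) (a_m b_m : R) (C_m : set (R * R))
  (Om_p : set (R * R)) (a_p b_p : R) (C_p : set (R * R)) :
  concave_toric Om_m a_m b_m C_m ->
  concave_toric Om_p a_p b_p C_p ->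
  (forall m n : nat, (0 < m)%N -> (0 < n)%N -> coprime m n ->
     omega_action C_m m n <= omega_action C_p m n) ->
  Om_m `<=` Om_p.
Proof.
move=> Hm Hp act_le p Omp; apply: contrapT => nOpp.
have [s /andP[s_ge0 s_lt1] nOsp] := closed_scaled_compl (concave_toric_closed Hp) nOpp.
have [|m [n [m_gt0 n_gt0 cop lower]]] := omega_action_lower_bound Hm Omp (t := (1 + s) / 2).
  by apply/andP; split; lra.
have [p1 p2] := concave_toric_quadrant Hm Omp.
have qsp : quadrant (s * p.1, s * p.2) by split; apply: mulr_ge0.
have upper := omega_action_upper_bound Hp m n qsp nOsp.
have p_neq0 : p <> (0, 0) by move=> p0; apply: nOpp; rewrite p0; exact: concave_toric_origin Hp.
have := dotp_nat_gt0 m_gt0 n_gt0 (conj p1 p2) p_neq0.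
have := act_le m n m_gt0 n_gt0 cop.
by move: lower upper; rewrite /dotp /=; nra.
Qed.
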